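(* Let $G$ be a finitely generated, torsion-free, $2$-step nilpotent group whose maximal ring of scalars is $\mathbb{Z}$. Then $G$ cannot be decomposed as a direct product $G=H\times K$ of two non-abelian subgroups $H,K$.
   Context: Commutators: $[g,h]=g^{-1}h^{-1}gh$. Rings are associative with identity. Let $f:G/Z(G)\times G/Z(G)\to G'$, $f(gZ(G),hZ(G))=[g,h]$. A commutative ring $R$ is a ring of scalars of $G$ if there are faithful actions of $R$ by endomorphisms on $M=G/Z(G)$ and $N=G'$ with $f(rx,y)=f(x,ry)=rf(x,y)$ for all $r\in R$, $x,y\in M$. Identifying each ring of scalars with its image in $\mathrm{End}(M)$, the maximal ring of scalars is the one containing all others (as subrings). *)

(* MathComp (only for comPzRingType and int); groups are encoded
   directly as a carrier type with operations and group axioms, since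
   MathComp has no theory of possibly infinite groups. *)
From HB Require Import structures.
From mathcomp Require Import all_boot all_algebra.
From Stdlib Require Import List.

Set Implicit Arguments.
Unset Strict Implicit.
Unset Printing Implicit Defensive.

Import GRing.Theory.

Record group := Group {
  gcar :> Type;
  gmul : gcar -> gcar -> gcar;
  gone : gcar;
  ginv : gcar -> gcar;
  gmulA : forall x y z, gmul x (gmul y z) = gmul (gmul x y) z;
  gmul1 : forall x, gmul gone x = x;
  gmulV : forall x, gmul (ginv x) x = gone
}.

Section GroupDefs.
Variable G : group.

Local Notation "x * y" := (gmul x y).
Local Notation "1" := (gone G).

Definition gcomm (g h : G) : G := ginv g * (ginv h * (g * h)).

Fixpoint gpow (g : G) (n : nat) : G :=
  match n with O => 1 | S n => g * gpow g n end.

Definition gzpow (g : G) (z : int) : G :=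
  match z with Posz n => gpow g n | Negz n => ginv (gpow g n.+1) end.

Definition in_center (z : G) : Prop := forall g : G, z * g = g * z.

(* congruence modulo Z(G): elements of M = G/Z(G) are represented by
   elements of G, and x, y represent the same coset iff x^-1 y in Z(G) *)
Definition modZ (x y : G) : Prop := in_center (ginv x * y).

Inductive in_derived : G -> Prop :=
  | der_one : in_derived 1
  | der_comm : forall a b y, in_derived y -> in_derived (gcomm a b * y)
  | der_commV : forall a b y, in_derived y -> in_derived (ginv (gcomm a b) * y).

Inductive generated (s : list G) : G -> Prop :=
  | gen_one : generated s 1
  | gen_mul : forall x y, In x s -> generated s y -> generated s (x * y)
  | gen_mulV : forall x y, In x s -> generated s y -> generated s (ginv x * y).

Definition finitely_generated : Prop :=
  exists s : list G, forall g : G, generated s g.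

Definition torsion_free : Prop :=
  forall (g : G) (n : nat), (0 < n)%N -> gpow g n = 1 -> g = 1.

Definition two_step_nilpotent : Prop :=
  forall g h k : G, gcomm (gcomm g h) k = 1.

(* A commutative ring R is a ring of scalars of G: a faithful action of R by
   endomorphisms on M = G/Z(G) (actM, on representatives) and a faithful action
   by endomorphisms on N = G' (actN), such that
   f(rx,y) = f(x,ry) = r f(x,y) where f(xZ,yZ) = [x,y]. *)
Definition ring_of_scalars (R : comPzRingType)
    (actM : R -> G -> G) (actN : R -> G -> G) : Prop :=
  (* actM r is a well-defined endomorphism of M *)
  (forall r x y, modZ x y -> modZ (actM r x) (actM r y)) /\
  (forall r x y, modZ (actM r (x * y)) (actM r x * actM r y)) /\
  (forall x, modZ (actM 1%R x) x) /\
  (forall r s x, modZ (actM (r + s)%R x) (actM r x * actM s x)) /\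
  (forall r s x, modZ (actM (r * s)%R x) (actM r (actM s x))) /\
  (forall r s, (forall x, modZ (actM r x) (actM s x)) -> r = s) /\
  (forall r a, in_derived a -> in_derived (actN r a)) /\
  (forall r a b, in_derived a -> in_derived b ->
     actN r (a * b) = actN r a * actN r b) /\
  (forall a, in_derived a -> actN 1%R a = a) /\
  (forall r s a, in_derived a -> actN (r + s)%R a = actN r a * actN s a) /\
  (forall r s a, in_derived a -> actN (r * s)%R a = actN r (actN s a)) /\
  (forall r s, (forall a, in_derived a -> actN r a = actN s a) -> r = s) /\
  (forall r x y, gcomm (actM r x) y = actN r (gcomm x y)) /\
  (forall r x y, gcomm x (actM r y) = actN r (gcomm x y)).

(* The maximal ring of scalars of G is Z: the integers, acting by integer
   powers on M and N, form a ring of scalars, and the image in End(M) of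
   every ring of scalars is contained in the image of Z. *)
Definition max_ring_of_scalars_is_Z : Prop :=
  ring_of_scalars (fun z x => gzpow x z) (fun z x => gzpow x z) /\
  forall (R : comPzRingType) (actM actN : R -> G -> G),
    ring_of_scalars actM actN ->
    forall r : R, exists z : int, forall x : G, modZ (actM r x) (gzpow x z).

Definition subgroup (H : G -> Prop) : Prop :=
  H 1 /\ (forall x y, H x -> H y -> H (x * y)) /\ (forall x, H x -> H (ginv x)).

Definition nonabelian (H : G -> Prop) : Prop :=
  exists a b, H a /\ H b /\ a * b <> b * a.

Definition direct_product (H K : G -> Prop) : Prop :=
  subgroup H /\ subgroup K /\
  (forall h k, H h -> K k -> h * k = k * h) /\
  (forall x, H x -> K x -> x = 1) /\
  (forall g, exists h k, H h /\ K k /\ g = h * k).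

End GroupDefs.

From mathcomp Require Import all_boot all_algebra.
From Stdlib Require Import ClassicalEpsilon.

Set Implicit Arguments.
Unset Strict Implicit.
Unset Printing Implicit Defensive.

(* If G = H x K with H and K non-abelian, then Z x Z is a ring of scalars of G,
   (a, b) acting by h k |-> h^a k^b on both G/Z(G) and G'.  The action is
   faithful because H' and K' contain non-trivial elements, of infinite order
   since G is torsion-free.  The idempotent (1, 0) kills K and fixes H, so it
   acts on G/Z(G) as no integer does, contradicting the maximality of Z. *)

Local Notation "x *g y" := (gmul x y) (at level 40, left associativity).

Section GroupLaws.
Variable G : group.
Implicit Types a b c d x y z : G.
Local Notation one := (gone G).

Lemma mulgV x : x *g ginv x = one.
Proof.
rewrite -[LHS]gmul1 -{1}(gmulV (ginv x)) -gmulA (gmulA (ginv x) x) gmulV gmul1.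
exact: gmulV.
Qed.

Lemma mulg1 x : x *g one = x.
Proof. by rewrite -(gmulV x) gmulA mulgV gmul1. Qed.

Lemma mulKg x y : ginv x *g (x *g y) = y.
Proof. by rewrite gmulA gmulV gmul1. Qed.

Lemma mulKVg x y : x *g (ginv x *g y) = y.
Proof. by rewrite gmulA mulgV gmul1. Qed.

Lemma mulgK x y : x *g y *g ginv y = x.
Proof. by rewrite -gmulA mulgV mulg1. Qed.

Lemma mulgI x y z : x *g y = x *g z -> y = z.
Proof. by move=> e; rewrite -(mulKg x y) e mulKg. Qed.

Lemma mulIg x y z : y *g x = z *g x -> y = z.
Proof. by move=> e; rewrite -(mulgK y x) e mulgK. Qed.

Lemma invg_inj x y : ginv x = ginv y -> x = y.
Proof. by move=> e; apply: (mulIg (x := ginv x)); rewrite mulgV e mulgV. Qed.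

Lemma invg1 : ginv one = one.
Proof. by rewrite -[LHS]gmul1 mulgV. Qed.

Lemma invMg x y : ginv (x *g y) = ginv y *g ginv x.
Proof.
apply: (mulgI (x := x *g y)); rewrite mulgV -gmulA (gmulA y) mulgV gmul1.
by rewrite mulgV.
Qed.

Lemma mulgACA a b c d :
  b *g c = c *g b -> a *g b *g (c *g d) = a *g c *g (b *g d).
Proof. by move=> bc; rewrite -!gmulA (gmulA b) bc -gmulA. Qed.

Lemma commg1P x y : gcomm x y = one -> x *g y = y *g x.
Proof.
rewrite /gcomm => xy1; have yxy : ginv y *g (x *g y) = x.
  by apply: (mulgI (x := ginv x)); rewrite xy1 gmulV.
by rewrite -{1}(mulKVg y (x *g y)) yxy.
Qed.

Lemma gpow1 n : gpow one n = one.
Proof. by elim: n => //= n ->; rewrite gmul1. Qed.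

Lemma gzpow1 (m : int) : gzpow one m = one.
Proof. by case: m => n; rewrite /gzpow gpow1 ?invg1. Qed.

Lemma gzpow_eq1 x (m : int) :
  torsion_free G -> gzpow x m = one -> m <> 0%R -> x = one.
Proof.
move=> tf; case: m => [n /= xn1 n_neq0|n /= xn1 _].
  by apply: (tf x n) => //; case: n n_neq0 {xn1}.
by apply: (tf x n.+1) => //; apply: invg_inj; rewrite xn1 invg1.
Qed.

Lemma center1 : in_center one.
Proof. by move=> g; rewrite gmul1 mulg1. Qed.

Lemma centerM x y : in_center x -> in_center y -> in_center (x *g y).
Proof. by move=> cx cy g; rewrite -gmulA cy gmulA cx gmulA. Qed.

Lemma centerV x : in_center x -> in_center (ginv x).
Proof. by move=> cx g; apply: (mulgI (x := x)); rewrite mulKVg gmulA cx mulgK. Qed.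

Lemma center_gzpow x (m : int) : in_center x -> in_center (gzpow x m).
Proof.
move=> cx; have cxn n : in_center (gpow x n).
  by elim: n => [|n IHn] /=; [exact: center1 | exact: centerM].
by case: m => n; [exact: cxn | exact/centerV/cxn].
Qed.

Lemma gcommMl_center x y c : in_center c -> gcomm (x *g c) y = gcomm x y.
Proof.
move=> cc; rewrite /gcomm invMg -(gmulA x c y) (cc y) (gmulA x y c).
rewrite (gmulA (ginv y) _ c) -gmulA (gmulA (ginv x) _ c) -(cc (ginv x *g _)).
by rewrite mulKg.
Qed.

Lemma modZP x y : modZ x y <-> exists2 c, in_center c & y = x *g c.
Proof.
split=> [xy|[c cc ->]]; last by rewrite /modZ mulKg.
by exists (ginv x *g y); rewrite ?mulKVg.
Qed.

Lemma modZ_refl x : modZ x x.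
Proof. by apply/modZP; exists one; rewrite ?mulg1 //; exact: center1. Qed.

Lemma modZ_sym x y : modZ x y -> modZ y x.
Proof.
by case/modZP=> c cc ->; apply/modZP; exists (ginv c); [exact: centerV | rewrite mulgK].
Qed.

Lemma modZ_trans x y z : modZ x y -> modZ y z -> modZ x z.
Proof.
case/modZP=> c cc ->; case/modZP=> d cd ->; apply/modZP.
by exists (c *g d); [exact: centerM | rewrite gmulA].
Qed.

Lemma modZM x x' y y' : modZ x x' -> modZ y y' -> modZ (x *g y) (x' *g y').
Proof.
case/modZP=> c cc ->; case/modZP=> d cd ->; apply/modZP.
exists (c *g d); first exact: centerM.
by rewrite -!gmulA; congr (x *g _); rewrite !gmulA cc.
Qed.

Lemma derivedM x y : in_derived x -> in_derived y -> in_derived (x *g y).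
Proof.
move=> dx dy; elim: dx => [|a b w _ IHw|a b w _ IHw]; first by rewrite gmul1.
  by rewrite -gmulA; apply: der_comm.
by rewrite -gmulA; apply: der_commV.
Qed.

Lemma derived_comm x y : in_derived (gcomm x y).
Proof. by rewrite -[gcomm x y]mulg1; apply/der_comm/der_one. Qed.

End GroupLaws.

Section Subgroup.
Variables (G : group) (S : G -> Prop).
Hypothesis subS : subgroup S.

Lemma subgroup1 : S (gone G). Proof. by case: subS. Qed.

Lemma subgroupM x y : S x -> S y -> S (x *g y).
Proof. by case: subS => _ [+ _]; apply. Qed.

Lemma subgroupV x : S x -> S (ginv x).
Proof. by case: subS => _ [_]; apply. Qed.

Lemma subgroup_gzpow x (m : int) : S x -> S (gzpow x m).
Proof.
move=> Sx; have Sxn n : S (gpow x n).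
  by elim: n => [|n IHn] /=; [exact: subgroup1 | exact: subgroupM].
by case: m => n; [exact: Sxn | exact/subgroupV/Sxn].
Qed.

Lemma subgroup_comm x y : S x -> S y -> S (gcomm x y).
Proof. by move=> Sx Sy; do !apply: subgroupM => //; exact: subgroupV. Qed.

End Subgroup.

Section IntegerScalars.
Variable G : group.
Hypothesis zpow_scalars :
  ring_of_scalars (fun (m : int) (x : G) => gzpow x m) (fun m x => gzpow x m).
Implicit Types (x y a b : G) (m n : int).

Lemma gzpowMg_modZ m x y : modZ (gzpow (x *g y) m) (gzpow x m *g gzpow y m).
Proof. by case: zpow_scalars => _ [+ _]; apply. Qed.

Lemma gzpowD_modZ m n x : modZ (gzpow x (m + n)%R) (gzpow x m *g gzpow x n).
Proof. by case: zpow_scalars => _ [_ [_ [+ _]]]; apply. Qed.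

Lemma gzpowM_modZ m n x : modZ (gzpow x (m * n)%R) (gzpow (gzpow x n) m).
Proof. by case: zpow_scalars => _ [_ [_ [_ [+ _]]]]; apply. Qed.

Lemma derived_gzpow m a : in_derived a -> in_derived (gzpow a m).
Proof. by case: zpow_scalars => _ [_ [_ [_ [_ [_ [+ _]]]]]]; apply. Qed.

Lemma gzpowMg_derived m a b : in_derived a -> in_derived b ->
  gzpow (a *g b) m = gzpow a m *g gzpow b m.
Proof. by case: zpow_scalars => _ [_ [_ [_ [_ [_ [_ [+ _]]]]]]]; apply. Qed.

Lemma gzpowD_derived m n a : in_derived a ->
  gzpow a (m + n)%R = gzpow a m *g gzpow a n.
Proof. by case: zpow_scalars => _ [_ [_ [_ [_ [_ [_ [_ [_ [+ _]]]]]]]]]; apply. Qed.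

Lemma gzpowM_derived m n a : in_derived a ->
  gzpow a (m * n)%R = gzpow (gzpow a n) m.
Proof. by case: zpow_scalars => _ [_ [_ [_ [_ [_ [_ [_ [_ [_ [+ _]]]]]]]]]]; apply. Qed.

Lemma gcomm_gzpowl m x y : gcomm (gzpow x m) y = gzpow (gcomm x y) m.
Proof.
by case: zpow_scalars => _ [_ [_ [_ [_ [_ [_ [_ [_ [_ [_ [_ [+ _]]]]]]]]]]]]; apply.
Qed.

Lemma gcomm_gzpowr m x y : gcomm x (gzpow y m) = gzpow (gcomm x y) m.
Proof. by case: zpow_scalars => _ [_ [_ [_ [_ [_ [_ [_ [_ [_ [_ [_ [_]]]]]]]]]]]]. Qed.

Hypothesis tfG : torsion_free G.

Lemma gzpow_inj_derived a m n : in_derived a -> a <> gone G ->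
  gzpow a m = gzpow a n -> m = n.
Proof.
move=> da a_neq1 amn; have an1 : gzpow a (n - m)%R = gone G.
  by apply: (mulIg (x := gzpow a m)); rewrite -gzpowD_derived // GRing.subrK gmul1 amn.
apply/eqP; rewrite eq_sym -GRing.subr_eq0; apply/negPn/negP => /eqP nm0.
exact: a_neq1 (gzpow_eq1 tfG an1 nm0).
Qed.

(* Comparing commutators with a fixed y moves the congruence mod Z(G) into G'. *)
Lemma gzpow_inj_modZ x y m n : x *g y <> y *g x ->
  modZ (gzpow x m) (gzpow x n) -> m = n.
Proof.
move=> xy_neq /modZP [c cc xmn].
have: gcomm (gzpow x n) y = gcomm (gzpow x m) y by rewrite xmn gcommMl_center.
rewrite !gcomm_gzpowl => /gzpow_inj_derived-> //; first exact: derived_comm.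
by move/commg1P.
Qed.

End IntegerScalars.

Section DirectProduct.
Variables (G : group) (H K : G -> Prop).
Hypothesis dpHK : direct_product H K.
Implicit Types (x y h k : G) (r s : int * int).
Local Notation one := (gone G).

Lemma dp_subgroupH : subgroup H. Proof. by case: dpHK. Qed.
Lemma dp_subgroupK : subgroup K. Proof. by case: dpHK => _ []. Qed.

Lemma dp_commute h k : H h -> K k -> h *g k = k *g h.
Proof. by case: dpHK => _ [_ [+ _]]; apply. Qed.

Lemma dp_trivI x : H x -> K x -> x = one.
Proof. by case: dpHK => _ [_ [_ [+ _]]]; apply. Qed.

Lemma dp_decomp x : exists hk : G * G, [/\ H hk.1, K hk.2 & x = hk.1 *g hk.2].
Proof. by case: dpHK => _ [_ [_ [_ /(_ x) [h [k [Hh [Kk ->]]]]]]]; exists (h, k). Qed.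

Definition dp_split x : G * G :=
  proj1_sig (constructive_indefinite_description _ (dp_decomp x)).
Definition projH x := (dp_split x).1.
Definition projK x := (dp_split x).2.

Lemma dp_splitP x : [/\ H (projH x), K (projK x) & x = projH x *g projK x].
Proof. exact: proj2_sig (constructive_indefinite_description _ (dp_decomp x)). Qed.

Lemma projH_in x : H (projH x). Proof. by case: (dp_splitP x). Qed.
Lemma projK_in x : K (projK x). Proof. by case: (dp_splitP x). Qed.
Lemma projHKE x : x = projH x *g projK x. Proof. by case: (dp_splitP x). Qed.

Lemma dp_decomp_uniq h k h' k' : H h -> K k -> H h' -> K k' ->
  h *g k = h' *g k' -> h = h' /\ k = k'.
Proof.
move=> Hh Kk Hh' Kk' hk_eq.
have hh'_eq : ginv h' *g h = k' *g ginv k by rewrite -(mulgK h k) hk_eq -gmulA mulKg.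
have hh'1 : ginv h' *g h = one.
  apply: dp_trivI; first exact: (subgroupM dp_subgroupH (subgroupV dp_subgroupH Hh')).
  by rewrite hh'_eq; exact: (subgroupM dp_subgroupK Kk' (subgroupV dp_subgroupK Kk)).
have hh' : h' = h by rewrite -[RHS](mulKVg h') hh'1 mulg1.
by subst h'; split => //; exact: mulgI hk_eq.
Qed.

Lemma projHK_mul h k : H h -> K k -> projH (h *g k) = h /\ projK (h *g k) = k.
Proof.
move=> Hh Kk; apply: dp_decomp_uniq => //; first exact: projH_in; first exact: projK_in.
exact/esym/projHKE.
Qed.

Lemma projHK_H h : H h -> projH h = h /\ projK h = one.
Proof. by move=> Hh; rewrite -{1 3}(mulg1 h); exact: projHK_mul (subgroup1 dp_subgroupK). Qed.

Lemma projHK_K k : K k -> projH k = one /\ projK k = k.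
Proof. by move=> Kk; rewrite -{1 2}(gmul1 k); exact: projHK_mul (subgroup1 dp_subgroupH) Kk. Qed.

Lemma projHK_M x y :
  projH (x *g y) = projH x *g projH y /\ projK (x *g y) = projK x *g projK y.
Proof.
have -> : x *g y = (projH x *g projH y) *g (projK x *g projK y).
  rewrite {1}(projHKE x) {1}(projHKE y); apply: mulgACA.
  by symmetry; apply: dp_commute; [exact: projH_in | exact: projK_in].
by apply: projHK_mul;
  [exact: (subgroupM dp_subgroupH (projH_in x) (projH_in y))
  | exact: (subgroupM dp_subgroupK (projK_in x) (projK_in y))].
Qed.

Lemma projHM x y : projH (x *g y) = projH x *g projH y. Proof. by case: (projHK_M x y). Qed.
Lemma projKM x y : projK (x *g y) = projK x *g projK y. Proof. by case: (projHK_M x y). Qed.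

Lemma projHK_V x : projH (ginv x) = ginv (projH x) /\ projK (ginv x) = ginv (projK x).
Proof.
have HV := subgroupV dp_subgroupH (projH_in x).
have KV := subgroupV dp_subgroupK (projK_in x).
have -> : ginv x = ginv (projH x) *g ginv (projK x).
  by rewrite {1}(projHKE x) invMg (dp_commute HV KV).
exact: projHK_mul.
Qed.

Lemma projHV x : projH (ginv x) = ginv (projH x). Proof. by case: (projHK_V x). Qed.
Lemma projKV x : projK (ginv x) = ginv (projK x). Proof. by case: (projHK_V x). Qed.

Lemma projH_comm x y : projH (gcomm x y) = gcomm (projH x) (projH y).
Proof. by rewrite /gcomm !projHM !projHV. Qed.

Lemma projK_comm x y : projK (gcomm x y) = gcomm (projK x) (projK y).
Proof. by rewrite /gcomm !projKM !projKV. Qed.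

Lemma gcomm_projHK x y :
  gcomm x y = gcomm (projH x) (projH y) *g gcomm (projK x) (projK y).
Proof. by rewrite {1}(projHKE (gcomm x y)) projH_comm projK_comm. Qed.

Lemma projHK_derived a : in_derived a -> in_derived (projH a) /\ in_derived (projK a).
Proof.
elim=> [|x y b _ [dHb dKb]|x y b _ [dHb dKb]].
- have [-> ->] := projHK_H (subgroup1 dp_subgroupH); split; exact: der_one.
- by rewrite projHM projKM projH_comm projK_comm; split; apply: der_comm.
- by rewrite projHM projKM projHV projKV projH_comm projK_comm; split; apply: der_commV.
Qed.

Lemma projHK_center z : in_center z -> in_center (projH z) /\ in_center (projK z).
Proof.
move=> cz; split=> g; rewrite [g in RHS]projHKE [g in LHS]projHKE.
- have zg : projH z *g projH g = projH g *g projH z by rewrite -!projHM cz.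
  rewrite gmulA zg -!gmulA; congr (_ *g _).
  by apply: dp_commute; [exact: projH_in | exact: projK_in].
- have zg : projK z *g projK g = projK g *g projK z by rewrite -!projKM cz.
  rewrite -gmulA -zg !gmulA; congr (_ *g _); symmetry.
  by apply: dp_commute; [exact: projH_in | exact: projK_in].
Qed.

Definition dpact r x : G := gzpow (projH x) r.1 *g gzpow (projK x) r.2.

Lemma projHK_dpact r x :
  projH (dpact r x) = gzpow (projH x) r.1 /\ projK (dpact r x) = gzpow (projK x) r.2.
Proof.
apply: projHK_mul; first exact: (subgroup_gzpow dp_subgroupH _ (projH_in x)).
exact: (subgroup_gzpow dp_subgroupK _ (projK_in x)).
Qed.

Lemma projH_dpact r x : projH (dpact r x) = gzpow (projH x) r.1.
Proof. by case: (projHK_dpact r x). Qed.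

Lemma projK_dpact r x : projK (dpact r x) = gzpow (projK x) r.2.
Proof. by case: (projHK_dpact r x). Qed.

Lemma dpact_dpact r s x :
  dpact r (dpact s x) = gzpow (gzpow (projH x) s.1) r.1 *g gzpow (gzpow (projK x) s.2) r.2.
Proof. by rewrite {1}/dpact projH_dpact projK_dpact. Qed.

Lemma dpact_H r h : H h -> dpact r h = gzpow h r.1.
Proof. by move=> Hh; rewrite /dpact (projHK_H Hh).1 (projHK_H Hh).2 gzpow1 mulg1. Qed.

Lemma dpact_K r k : K k -> dpact r k = gzpow k r.2.
Proof. by move=> Kk; rewrite /dpact (projHK_K Kk).1 (projHK_K Kk).2 gzpow1 gmul1. Qed.

Lemma gzpow_projHK_commute (m n : int) x y :
  gzpow (projH x) m *g gzpow (projK y) n = gzpow (projK y) n *g gzpow (projH x) m.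
Proof.
apply: dp_commute.
  exact: (subgroup_gzpow dp_subgroupH _ (projH_in x)).
exact: (subgroup_gzpow dp_subgroupK _ (projK_in y)).
Qed.

End DirectProduct.

Section ProductScalars.
Variables (G : group) (H K : G -> Prop).
Hypothesis dpHK : direct_product H K.
Hypothesis zpow_scalars :
  ring_of_scalars (fun (m : int) (x : G) => gzpow x m) (fun m x => gzpow x m).
Implicit Types (x y a b : G) (r s : int * int).
Local Notation projH := (projH dpHK).
Local Notation projK := (projK dpHK).
Local Notation dpact := (dpact dpHK).

Lemma dpactM_modZ r x y : modZ (dpact r (x *g y)) (dpact r x *g dpact r y).
Proof.
case: r => m n; rewrite /dpact /= projHM projKM.
apply: modZ_trans (modZM (gzpowMg_modZ zpow_scalars _ _ _)
                         (gzpowMg_modZ zpow_scalars _ _ _)) _.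
by rewrite mulgACA ?gzpow_projHK_commute //; exact: modZ_refl.
Qed.

Lemma dpact_center r x : in_center x -> in_center (dpact r x).
Proof.
by case/(projHK_center dpHK) => cH cK; apply: centerM; apply: center_gzpow.
Qed.

Lemma dpact_modZ r x y : modZ x y -> modZ (dpact r x) (dpact r y).
Proof.
case/modZP=> c cc ->; apply: modZ_sym; apply: modZ_trans (dpactM_modZ r x c) _.
by apply: modZ_sym; apply/modZP; exists (dpact r c) => //; exact: dpact_center.
Qed.

Lemma dpact1 x : dpact 1%R x = x.
Proof. by rewrite /dpact /= !mulg1 -projHKE. Qed.

Lemma dpactD_modZ r s x : modZ (dpact (r + s)%R x) (dpact r x *g dpact s x).
Proof.
case: r s => [m n] [m' n']; rewrite /dpact /=.
apply: modZ_trans (modZM (gzpowD_modZ zpow_scalars _ _ _)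
                         (gzpowD_modZ zpow_scalars _ _ _)) _.
by rewrite mulgACA ?gzpow_projHK_commute //; exact: modZ_refl.
Qed.

Lemma dpactA_modZ r s x : modZ (dpact (r * s)%R x) (dpact r (dpact s x)).
Proof.
case: r s => [m n] [m' n']; rewrite dpact_dpact /dpact /=.
exact: modZM (gzpowM_modZ zpow_scalars _ _ _) (gzpowM_modZ zpow_scalars _ _ _).
Qed.

Lemma dpact_derived r a : in_derived a -> in_derived (dpact r a).
Proof.
case/(projHK_derived dpHK) => dH dK.
by apply: derivedM; apply: derived_gzpow.
Qed.

Lemma dpactM_derived r a b : in_derived a -> in_derived b ->
  dpact r (a *g b) = dpact r a *g dpact r b.
Proof.
case: r => m n /(projHK_derived dpHK) [dHa dKa] /(projHK_derived dpHK) [dHb dKb].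
rewrite /dpact /= projHM projKM !gzpowMg_derived //.
by rewrite mulgACA // gzpow_projHK_commute.
Qed.

Lemma dpactD_derived r s a : in_derived a -> dpact (r + s)%R a = dpact r a *g dpact s a.
Proof.
case: r s => [m n] [m' n'] /(projHK_derived dpHK) [dHa dKa].
rewrite /dpact /= !gzpowD_derived //.
by rewrite mulgACA // gzpow_projHK_commute.
Qed.

Lemma dpactA_derived r s a : in_derived a -> dpact (r * s)%R a = dpact r (dpact s a).
Proof.
case: r s => [m n] [m' n'] /(projHK_derived dpHK) [dHa dKa].
by rewrite dpact_dpact /dpact /= !gzpowM_derived.
Qed.

Lemma gcomm_dpactl r x y : gcomm (dpact r x) y = dpact r (gcomm x y).
Proof.
case: r => m n; rewrite (gcomm_projHK dpHK) projH_dpact projK_dpact.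
by rewrite /dpact projH_comm projK_comm /= !gcomm_gzpowl.
Qed.

Lemma gcomm_dpactr r x y : gcomm x (dpact r y) = dpact r (gcomm x y).
Proof.
case: r => m n; rewrite (gcomm_projHK dpHK) projH_dpact projK_dpact.
by rewrite /dpact projH_comm projK_comm /= !gcomm_gzpowr.
Qed.

Hypothesis tfG : torsion_free G.
Hypotheses (nabH : nonabelian H) (nabK : nonabelian K).

Lemma dpact_faithful_modZ r s : (forall x, modZ (dpact r x) (dpact s x)) -> r = s.
Proof.
case: r s => [m n] [m' n'] rs.
case: nabH => h [h' [Hh [_ hh']]]; case: nabK => k [k' [Kk [_ kk']]].
have := rs h; rewrite !(dpact_H dpHK _ Hh) /= => /(gzpow_inj_modZ zpow_scalars tfG hh') ->.
by have := rs k; rewrite !(dpact_K dpHK _ Kk) /= => /(gzpow_inj_modZ zpow_scalars tfG kk') ->.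
Qed.

Lemma dpact_faithful_derived r s :
  (forall a, in_derived a -> dpact r a = dpact s a) -> r = s.
Proof.
case: r s => [m n] [m' n'] rs.
case: nabH => h [h' [Hh [Hh' hh']]]; case: nabK => k [k' [Kk [Kk' kk']]].
have hh'1 : gcomm h h' <> gone G by move/commg1P.
have kk'1 : gcomm k k' <> gone G by move/commg1P.
have := rs _ (derived_comm h h').
rewrite !(dpact_H dpHK _ (subgroup_comm (dp_subgroupH dpHK) Hh Hh')) /=.
move/(gzpow_inj_derived zpow_scalars tfG (derived_comm h h') hh'1) ->.
have := rs _ (derived_comm k k').
rewrite !(dpact_K dpHK _ (subgroup_comm (dp_subgroupK dpHK) Kk Kk')) /=.
by move/(gzpow_inj_derived zpow_scalars tfG (derived_comm k k') kk'1) ->.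
Qed.

Lemma dpact_ring_of_scalars : ring_of_scalars dpact dpact.
Proof.
repeat split.
- exact: dpact_modZ.
- exact: dpactM_modZ.
- by move=> x; rewrite dpact1; exact: modZ_refl.
- exact: dpactD_modZ.
- exact: dpactA_modZ.
- exact: dpact_faithful_modZ.
- exact: dpact_derived.
- exact: dpactM_derived.
- by move=> a _; rewrite dpact1.
- exact: dpactD_derived.
- exact: dpactA_derived.
- exact: dpact_faithful_derived.
- exact: gcomm_dpactl.
- exact: gcomm_dpactr.
Qed.

Lemma dpact_idempotent_not_integer :
  ~ exists m : int, forall x, modZ (dpact (1%R, 0%R) x) (gzpow x m).
Proof.
case=> m act_m; case: nabH => h [h' [Hh [_ hh']]]; case: nabK => k [k' [Kk [_ kk']]].
have := act_m k; rewrite (dpact_K dpHK _ Kk) => /(gzpow_inj_modZ zpow_scalars tfG kk') m0.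
by have := act_m h; rewrite (dpact_H dpHK _ Hh) -m0 => /(gzpow_inj_modZ zpow_scalars tfG hh').
Qed.

End ProductScalars.

Theorem proposition3p4 (G : group) :
  finitely_generated G -> torsion_free G -> two_step_nilpotent G ->
  max_ring_of_scalars_is_Z G ->
  ~ (exists H K : G -> Prop,
       direct_product H K /\ nonabelian H /\ nonabelian K).
Proof.
move=> _ tfG _ [zpow_scalars max_Z] [H [K [dpHK [nabH nabK]]]].
have dpact_scalars := dpact_ring_of_scalars dpHK zpow_scalars tfG nabH nabK.
have [m act_m] := max_Z _ _ _ dpact_scalars (1%R, 0%R).
exact: (dpact_idempotent_not_integer zpow_scalars tfG nabH nabK (ex_intro _ m act_m)).
Qed.
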